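(* Let $d\geq 1$, let $p\in[0,1]$ with $p<p_d=\frac{2d+1}{4d}$, let $(S_n)$ be the $d$-dimensional elephant random walk with memory parameter $p$, and let $G_n=\frac{1}{n}\sum_{k=1}^n S_k$ be its center of mass. Then $$\lim_{n\to\infty}\frac{1}{n}G_n=0 \quad\text{almost surely.}$$
   Context: The $d$-dimensional elephant random walk (ERW) with memory parameter $p\in[0,1]$ is defined as follows. Let $e_1,\dots,e_d$ be the standard basis of $\mathbb{R}^d$; the $2d$ directions are $\pm e_1,\dots,\pm e_d$. Set $S_0=0$. The first step $X_1$ is uniformly distributed on the $2d$ directions. For $n\geq 1$, given $X_1,\dots,X_n$, an index $k$ is chosen uniformly at random in $\{1,\dots,n\}$, and then $X_{n+1}=X_k$ with probability $p$, while $X_{n+1}$ equals each of the $2d-1$ remaining directions with probability $(1-p)/(2d-1)$. The position is $S_{n+1}=S_n+X_{n+1}$. The regime $p<p_d$ is called the diffusive regime. *)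

From HB Require Import structures.
From mathcomp Require Import all_boot all_order all_algebra.
From mathcomp Require Import all_classical all_reals all_analysis.
Set Implicit Arguments. Unset Strict Implicit. Unset Printing Implicit Defensive.
Import Order.TTheory GRing.Theory Num.Theory.
Import numFieldNormedType.Exports.
Local Open Scope classical_set_scope.
Local Open Scope ring_scope.

(* A direction in Z^d: (i, b) stands for +e_i if b = true, -e_i if b = false. *)
Definition dir (d : nat) := ('I_d * bool)%type.

Definition dir_vec {R : realType} {d : nat} (x : dir d) : 'rV[R]_d :=
  \row_j (if j == x.1 then (if x.2 then 1 else -1) else 0).

(* Conditional probability that X_{m+1} = y given X_1 = xs 1, ..., X_m = xs m
   (m >= 1): a uniform index k in {1..m} is chosen; X_{m+1} = X_k w.p. p, and
   each of the 2d-1 other directions w.p. (1-p)/(2d-1). *)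
Definition erw_trans {R : realType} {d : nat} (p : R) (m : nat)
    (xs : nat -> dir d) (y : dir d) : R :=
  m%:R^-1 * \sum_(1 <= k < m.+1)
     (if xs k == y then p else (1 - p) / (2 * d%:R - 1)).

Definition erw_path_prob {R : realType} {d : nat} (p : R) (n : nat)
    (xs : nat -> dir d) : R :=
  (2 * d%:R)^-1 * \prod_(1 <= m < n) erw_trans p m xs (xs m.+1).

(* X : nat -> T -> dir d is the step sequence of the d-dimensional elephant
   random walk with memory parameter p under P (steps are X 1, X 2, ...;
   X 0 is irrelevant): the step events are measurable and the finite-dimensional
   laws are those given by the ERW dynamics. *)
Definition is_ERW {R : realType} {dT : measure_display} {T : measurableType dT}
    (P : probability T R) (d : nat) (p : R) (X : nat -> T -> dir d) : Prop :=
  (forall k (x : dir d), measurable [set w | X k w = x]) /\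
  (forall (n : nat) (xs : nat -> dir d), (1 <= n)%N ->
     P [set w | forall k, (1 <= k <= n)%N -> X k w = xs k]
       = (erw_path_prob p n xs)%:E).

Definition erw_pos {R : realType} {T : Type} {d : nat} (X : nat -> T -> dir d)
    (n : nat) (w : T) : 'rV[R]_d :=
  \sum_(1 <= k < n.+1) dir_vec (X k w).

Definition erw_center {R : realType} {T : Type} {d : nat} (X : nat -> T -> dir d)
    (n : nat) (w : T) : 'rV[R]_d :=
  n%:R^-1 *: \sum_(1 <= k < n.+1) erw_pos X k w.

(* Write a = (2dp - 1)/(2d - 1), so that p < p_d iff a < 1/2.  Given the first n steps,
   the next step has mean (a/n) S_n, hence E|S_{n+1}|^2 = (1 + 2a/n) E|S_n|^2 + 1 and,
   for a < 1/2, E|S_n|^2 = O(n).  Chebyshev's inequality along the squares n = k^2 gives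
   probabilities O(1/k^2), so by Borel-Cantelli S_{k^2} = o(k^2) almost surely.  Since
   the steps have unit length, |S_m - S_{k^2}| <= 2k for k^2 <= m < (k+1)^2, whence
   S_n = o(n), and G_n / n = n^{-2} (S_1 + ... + S_n) tends to 0. *)

From HB Require Import structures.
From mathcomp Require Import all_boot all_order all_algebra.
From mathcomp Require Import all_classical all_reals all_analysis.
From mathcomp Require Import ring lra zify.
Import Order.TTheory GRing.Theory Num.Theory.
Import numFieldNormedType.Exports.
Local Open Scope classical_set_scope.
Local Open Scope ring_scope.
Set Implicit Arguments. Unset Strict Implicit. Unset Printing Implicit Defensive.

Lemma sum_inv_sqr_le (R : realFieldType) n :
  \sum_(k < n) ((k.+1 ^ 2)%:R)^-1 <= 2 - 2 / n.+1%:R :> R.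
Proof.
pose u k : R := - 2 / k.+1%:R.
have step k : ((k.+1 ^ 2)%:R)^-1 <= u k.+1 - u k.
  have x1 : 1 <= k.+1%:R :> R by rewrite ler1n.
  rewrite /u natrX -[k.+2%:R]natr1; set x : R := k.+1%:R in x1 *.
  have x_gt0 : 0 < x by lra.
  have -> : - 2 / (x + 1) - - 2 / x = 2 / (x * (x + 1)) by field; lra.
  rewrite -[leLHS]mul1r ler_pdivlMr ?mulr_gt0 ?addr_gt0 // mul1r mulrC.
  by rewrite ler_pdivrMr ?exprn_gt0 // expr2; nra.
rewrite -(big_mkord xpredT (fun k => ((k.+1 ^ 2)%:R)^-1)).
rewrite (le_trans (ler_sum _ (fun k _ => step k))) // telescope_sumr //.
by rewrite /u divr1 !mulNr opprK addrC.
Qed.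

Lemma le_measure_bigsetU d (T : measurableType d) (R : realType)
    (mu : {measure set T -> \bar R}) (I : Type) (r : seq I) (P : pred I)
    (F : I -> set T) :
  (forall i, P i -> measurable (F i)) ->
  (mu (\big[setU/set0]_(i <- r | P i) F i) <= \sum_(i <- r | P i) mu (F i))%E.
Proof.
move=> mF; pose Q A (e : \bar R) := measurable A /\ (mu A <= e)%E.
suff [] : Q (\big[setU/set0]_(i <- r | P i) F i) (\sum_(i <- r | P i) mu (F i)) by [].
apply: (big_ind2 Q); first by split; rewrite ?measure0.
- move=> A1 e1 A2 e2 [mA1 le1] [mA2 le2]; split; first exact: measurableU.
  exact: le_trans (measureU2 _ mA1 mA2) (leeD le1 le2).
- by move=> i Pi; split; [exact: mF|].
Qed.

Lemma borel_cantelli_inv_sqr d (T : measurableType d) (R : realType)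
    (mu : {measure set T -> \bar R}) (F : (set T)^nat) (C : R) :
  (forall k, measurable (F k)) ->
  (forall k, (mu (F k) <= (C / (k.+1 ^ 2)%:R)%:E)%E) ->
  {ae mu, forall w, \forall k \near \oo, ~ F k w}.
Proof.
move=> mF muF.
have C0 : 0 <= C by have := le_trans (measure_ge0 mu (F 0)) (muF 0); rewrite lee_fin divr1.
have sum_fin : (\sum_(k <oo) mu (F k) < +oo)%E.
  apply: (@le_lt_trans _ _ (2 * C)%:E); last exact: ltry.
  apply: lime_le; first by apply: is_cvg_nneseries => *; exact: measure_ge0.
  apply: nearW => n; rewrite (le_trans (lee_sum _ (fun k _ => muF k))) //.
  rewrite sumEFin lee_fin big_mkord -mulr_sumr mulrC ler_wpM2r //.
  by rewrite (le_trans (sum_inv_sqr_le R n)) // gerDl oppr_le0.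
exists (lim_sup_set F); split.
- by apply: bigcapT_measurable => n; exact: bigcup_measurable.
- exact: lim_sup_set_cvg0.
- move=> w /= notev n _; apply: contrapT => nF; apply: notev.
  by exists n => // k /= nk Fk; apply: nF; exists k.
Qed.

Lemma affine_rec_linear_bound (R : realFieldType) (b : R) (u : nat -> R) :
  b < 1 -> (forall n, 0 <= u n) ->
  (forall n, (0 < n)%N -> u n.+1 = (1 + b / n%:R) * u n + 1) ->
  exists K, forall n, (0 < n)%N -> u n <= K * n%:R.
Proof.
move=> b_lt1 u_ge0 u_rec.
pose K := Num.max (u 1%N) (Num.max 1 (1 - b)^-1).
have K1 : 1 <= K by rewrite !le_max lexx orbT.
have Kb : 1 <= K * (1 - b).
  by rewrite -ler_pdivrMr ?subr_gt0 // mul1r !le_max lexx !orbT.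
exists K; elim=> [//|[|n] IH _]; first by rewrite mulr1 le_max lexx.
have {}IH := IH isT; rewrite u_rec // -[n.+2%:R]natr1.
set N : R := n.+1%:R in IH *.
have N0 : 0 < N by rewrite ltr0n.
rewrite mulrDl mul1r; set t := b / N * u n.+1.
have [b0|b0] := leP 0 b.
  have : t <= b * K.
    by rewrite /t mulrAC ler_pdivrMr // -mulrA ler_wpM2l.
  nra.
have : t <= 0 by rewrite /t !mulr_le0_ge0 ?u_ge0 ?invr_ge0 ?(ltW b0) ?(ltW N0).
lra.
Qed.

Lemma nat_sqrt_bracket m : exists k, (k ^ 2 <= m < k.+1 ^ 2)%N.
Proof.
elim: m => [|m [k /andP[lekm ltmk]]]; first by exists 0%N.
have [ltmk'|lekm'] := ltnP m.+1 (k.+1 ^ 2); first by exists k; rewrite ltmk'; lia.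
by exists k.+1; rewrite lekm'; nia.
Qed.

Section sublinear.
Variables (R : realType) (V : normedModType R).
Implicit Type v : nat -> V.

Definition sublinear v :=
  forall e : R, 0 < e -> exists M : R, forall m, `|v m| <= e * m%:R + M.

Lemma dist_le_steps v : (forall m, `|v m.+1 - v m| <= 1) ->
  forall m t, `|v (m + t)%N - v m| <= t%:R.
Proof.
move=> step m; elim=> [|t IH]; first by rewrite addn0 subrr normr0.
rewrite addnS -natr1 -(subrKA (v (m + t)%N)).
by rewrite (le_trans (ler_normD _ _)) // addrC lerD.
Qed.

Lemma sublinear_of_squares v : v 0%N = 0 -> (forall m, `|v m.+1 - v m| <= 1) ->
  (forall e, 0 < e -> \forall k \near \oo, `|v (k ^ 2)%N| <= e * (k ^ 2)%:R) ->
  sublinear v.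
Proof.
move=> v0 step sq e e0.
have e20 : 0 < e / 2 by rewrite divr_gt0.
have [K _ K_large] := filterI (sq _ e20) (nbhs_infty_ger (4 / e)).
exists (K ^ 2)%:R => m.
have [k /andP[lekm ltmk]] := nat_sqrt_bracket m.
have em0 : 0 <= e * m%:R by rewrite mulr_ge0 // (ltW e0).
have [ltkK|leKk] := ltnP k K.
  have := dist_le_steps step 0 m; rewrite add0n v0 subr0 => /le_trans; apply.
  have : (m <= K ^ 2)%N by rewrite (leq_trans (ltnW ltmk)) // leq_exp2r.
  by rewrite -(ler_nat R) => ?; lra.
have [vk_small k_large] := K_large k leKk.
have := dist_le_steps step (k ^ 2) (m - k ^ 2); rewrite subnKC // => dmk.
(* Since k >= 4 / e, the gap 2k between consecutive squares is at most (e/2) k^2. *)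
have gap : ((m - k ^ 2)%N%:R <= e / 2 * (k ^ 2)%:R :> R).
  have : ((m - k ^ 2)%N <= 2 * k)%N by nia.
  rewrite -(ler_nat R) natrM => /le_trans; apply.
  rewrite natrX expr2 mulrA ler_wpM2r //.
  by move: k_large; rewrite ler_pdivrMr // => ?; lra.
have sqm : (k ^ 2)%:R <= m%:R :> R by rewrite ler_nat.
have := ler_normD (v (k ^ 2)%N) (v m - v (k ^ 2)%N); rewrite subrKC => tri.
have : 0 <= (K ^ 2)%:R :> R by [].
nra.
Qed.

Lemma sublinear_mean_cvg v : sublinear v ->
  (fun n => n%:R^-1 *: (n%:R^-1 *: \sum_(1 <= k < n.+1) v k)) @ \oo --> 0.
Proof.
move=> subv; apply/cvgrPdist_le => e e0.
have [M hM] := subv (e / 2) (divr_gt0 e0 (ltr0Sn _ 1)).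
have M0 : 0 <= M by have := hM 0%N; rewrite mulr0 add0r; apply: le_trans.
near=> n.
have n0 : 0 < n%:R :> R by near: n; exists 1%N => // k /=; rewrite ltr0n.
have nM : 2 * M / e <= n%:R :> R by near: n; exact: nbhs_infty_ger.
rewrite sub0r normrN !normrZ ger0_norm ?invr_ge0 ?(ltW n0) //.
have sum_le : `|\sum_(1 <= k < n.+1) v k| <= n%:R * (e / 2 * n%:R + M).
  rewrite (le_trans (ler_norm_sum _ _ _)) //.
  rewrite (@le_trans _ _ (\sum_(1 <= k < n.+1) (e / 2 * n%:R + M))) //.
    apply: ler_sum_nat => k /andP[_ kn]; rewrite (le_trans (hM k)) // lerD2r.
    by rewrite ler_wpM2l ?ler_nat ?divr_ge0 ?(ltW e0).
  by rewrite sumr_const_nat subn1 mulr_natl.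
rewrite mulrA (le_trans (ler_wpM2l _ sum_le)) ?mulr_ge0 ?invr_ge0 ?(ltW n0) //.
have -> : n%:R^-1 * n%:R^-1 * (n%:R * (e / 2 * n%:R + M)) = e / 2 + M / n%:R.
  by field; rewrite lt0r_neq0.
have : M / n%:R <= e / 2.
  by rewrite ler_pdivrMr //; move: nM; rewrite ler_pdivrMr // => ?; nra.
lra.
Unshelve. all: by end_near.
Qed.

End sublinear.

Section row_dot.
Variables (R : comPzRingType) (n : nat).
Implicit Types u v w : 'rV[R]_n.

Definition dotr u v : R := \sum_i u 0 i * v 0 i.
Definition sqnorm v : R := dotr v v.

Lemma dotr_sumr u I (r : seq I) (P : pred I) (F : I -> 'rV[R]_n) :
  dotr u (\sum_(i <- r | P i) F i) = \sum_(i <- r | P i) dotr u (F i).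
Proof.
rewrite /dotr exchange_big /=; apply: eq_bigr => j _.
by rewrite summxE mulr_sumr.
Qed.

Lemma dotrZr u a v : dotr u (a *: v) = a * dotr u v.
Proof. by rewrite /dotr mulr_sumr; apply: eq_bigr => j _; rewrite mxE mulrCA. Qed.

Lemma sqnormD u v : sqnorm (u + v) = sqnorm u + 2 * dotr u v + sqnorm v.
Proof.
rewrite /sqnorm /dotr mulr_sumr -!big_split /=.
by apply: eq_bigr => j _; rewrite mxE; ring.
Qed.

End row_dot.

Lemma sqnorm_ge0 (R : realDomainType) n (v : 'rV[R]_n) : 0 <= sqnorm v.
Proof. by apply: sumr_ge0 => i _; rewrite -expr2 sqr_ge0. Qed.

Lemma norm_sqr_le_sqnorm (R : realType) n (v : 'rV[R]_n) : `|v| ^+ 2 <= sqnorm v.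
Proof.
change (mx_norm v ^+ 2 <= sqnorm v).
have [->|/mx_norm_neq0 [[i j] ->]] := eqVneq (mx_norm v) 0; first by rewrite expr0n sqnorm_ge0.
rewrite (ord1 i) real_normK ?num_real // /sqnorm /dotr (bigD1 j) //= expr2.
by rewrite lerDl sumr_ge0 // => k _; rewrite -expr2 sqr_ge0.
Qed.

Lemma sum_indicatorZ (R : pzRingType) (I : finType) (V : lmodType R) (x : I) (f : I -> V) :
  \sum_(y : I) (x == y)%:R *: f y = f x.
Proof.
rewrite (bigD1 x) //= eqxx scale1r big1 ?addr0 // => y.
by rewrite eq_sym => /negbTE ->; rewrite scale0r.
Qed.

Section erw_transition.
Variables (R : realType) (d : nat) (p : R).
Hypotheses (d_gt0 : (0 < d)%N) (p_ge0 : 0 <= p) (p_le1 : p <= 1).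

(* [erw_q] is the probability of each of the 2d - 1 directions not copied from memory;
   [erw_a] = (2dp - 1)/(2d - 1) is the drift coefficient [a] of the proof sketch. *)
Definition erw_q : R := (1 - p) / (2 * d%:R - 1).
Definition erw_a : R := p - erw_q.

Lemma card_dir : #|{: dir d}| = (2 * d)%N.
Proof. by rewrite card_prod card_ord card_bool mulnC. Qed.

Lemma sum_dir_vec : \sum_(y : dir d) dir_vec y = 0 :> 'rV[R]_d.
Proof.
rewrite -(pair_big xpredT xpredT (fun i b => dir_vec (i, b))) /=.
rewrite big1 // => i _; rewrite big_bool; apply/rowP => j.
by rewrite !mxE /=; case: (j == i); rewrite ?subrr ?addr0.
Qed.

Lemma sqnorm_dir_vec (y : dir d) : sqnorm (dir_vec y : 'rV[R]_d) = 1.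
Proof.
rewrite /sqnorm /dotr (bigD1 y.1) //= big1 => [|j /negbTE hj]; last first.
  by rewrite mxE hj mul0r.
by rewrite addr0 mxE eqxx; case: y.2; rewrite ?mulrNN mulr1.
Qed.

Let dpos : 0 < 2 * d%:R - 1 :> R.
Proof. have : 1 <= d%:R :> R by rewrite ler1n. lra. Qed.

Lemma erw_q_ge0 : 0 <= erw_q.
Proof. by rewrite divr_ge0 ?(ltW dpos) // subr_ge0. Qed.

Lemma erw_q_a1 : 2 * d%:R * erw_q + erw_a = 1.
Proof. rewrite /erw_a /erw_q; field; exact: lt0r_neq0. Qed.

Lemma erw_a_lt_half : p < (2 * d%:R + 1) / (4 * d%:R) -> 2 * erw_a < 1.
Proof.
rewrite ltr_pdivlMr ?mulr_gt0 ?ltr0n // => p_lt.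
rewrite -subr_gt0 (_ : _ - _ = (2 * d%:R + 1 - p * (4 * d%:R)) / (2 * d%:R - 1)).
  by rewrite divr_gt0 // subr_gt0.
rewrite /erw_a /erw_q; field; exact: lt0r_neq0.
Qed.

Variables (n : nat) (xs : nat -> dir d).
Hypothesis n_gt0 : (0 < n)%N.

Lemma erw_transE y : erw_trans p n xs y
  = erw_q + erw_a / n%:R * \sum_(1 <= k < n.+1) (xs k == y)%:R.
Proof.
have n0 : n%:R != 0 :> R by rewrite pnatr_eq0 -lt0n.
have split_if k : (if xs k == y then p else erw_q) = erw_q + erw_a * (xs k == y)%:R.
  by rewrite /erw_a; case: (_ == _); rewrite ?mulr1 ?mulr0 ?addr0 // addrC subrK.
rewrite /erw_trans -/erw_q (eq_bigr _ (fun k _ => split_if k)) big_split /=.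
rewrite sumr_const_nat subn1 /= -mulr_sumr -[erw_q *+ n]mulr_natr.
rewrite mulrDr mulrCA mulVf // mulr1.
by rewrite mulrA [_^-1 * _]mulrC.
Qed.

Lemma erw_trans_ge0 y : 0 <= erw_trans p n xs y.
Proof.
rewrite mulr_ge0 ?invr_ge0 // sumr_ge0 // => k _.
by case: ifP => _ //; exact: erw_q_ge0.
Qed.

Lemma sum_erw_trans : \sum_(y : dir d) erw_trans p n xs y = 1.
Proof.
have count1 k : \sum_(y : dir d) (xs k == y)%:R = 1 :> R.
  rewrite -[RHS](sum_indicatorZ (xs k) (fun=> 1 : R^o)).
  by apply: eq_bigr => y _; rewrite [RHS]mulr1.
under eq_bigr do rewrite erw_transE.
rewrite big_split /= sumr_const card_dir -mulr_sumr exchange_big /=.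
under eq_bigr do rewrite count1.
rewrite sumr_const_nat subn1 /= divfK ?pnatr_eq0 -?lt0n // -erw_q_a1.
by rewrite -[erw_q *+ _]mulr_natl natrM.
Qed.

Lemma mean_erw_step : \sum_(y : dir d) erw_trans p n xs y *: (dir_vec y : 'rV[R]_d)
  = (erw_a / n%:R) *: \sum_(1 <= k < n.+1) dir_vec (xs k).
Proof.
under eq_bigr do rewrite erw_transE scalerDl -scalerA.
rewrite big_split /= -scaler_sumr sum_dir_vec scaler0 add0r -scaler_sumr.
congr (_ *: _).
transitivity (\sum_(1 <= k < n.+1) \sum_(y : dir d) (xs k == y)%:R *: (dir_vec y : 'rV[R]_d)).
  by rewrite exchange_big /=; apply: eq_bigr => y _; rewrite scaler_suml.
by apply: eq_bigr => k _; rewrite sum_indicatorZ.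
Qed.

Lemma erw_step_sqnorm :
  let S := \sum_(1 <= k < n.+1) (dir_vec (xs k) : 'rV[R]_d) in
  \sum_(y : dir d) erw_trans p n xs y * sqnorm (S + dir_vec y)
  = (1 + 2 * erw_a / n%:R) * sqnorm S + 1.
Proof.
move=> S.
have expand y : erw_trans p n xs y * sqnorm (S + dir_vec y)
    = erw_trans p n xs y * sqnorm S + 2 * dotr S (erw_trans p n xs y *: dir_vec y)
      + erw_trans p n xs y.
  by rewrite sqnormD sqnorm_dir_vec dotrZr; ring.
rewrite (eq_bigr _ (fun y _ => expand y)) !big_split /=.
rewrite -[\sum_i _ * sqnorm S]mulr_suml -[\sum_i 2 * _]mulr_sumr.
by rewrite -dotr_sumr mean_erw_step dotrZr sum_erw_trans -/(sqnorm S); ring.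
Qed.

End erw_transition.

Section erw_paths.
Variables (R : realType) (d : nat) (p : R) (y0 : dir d).
Hypotheses (d_gt0 : (0 < d)%N) (p_ge0 : 0 <= p) (p_le1 : p <= 1).
Implicit Type s : seq (dir d).

(* Steps are numbered from 1, as in [erw_path_prob]; [y0] is only a default value. *)
Definition path_fun s : nat -> dir d := fun k => nth y0 s k.-1.
Definition path_pos s : 'rV[R]_d := \sum_(x <- s) dir_vec x.
Definition path_prob s : R := erw_path_prob p (size s) (path_fun s).

Fixpoint paths n : seq (seq (dir d)) :=
  if n is n'.+1 then [seq rcons s y | s <- paths n', y <- index_enum (dir d)]
  else [:: [::]].

Lemma size_paths n s : s \in paths n -> size s = n.
Proof.
elim: n s => [|n IH] s /=; first by rewrite inE => /eqP ->.
by case/allpairsP => -[s' y] /= [/IH s'n _ ->]; rewrite size_rcons s'n.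
Qed.

Lemma mem_paths s : s \in paths (size s).
Proof.
elim/last_ind: s => [|s y IH] //=; rewrite size_rcons /=.
by apply/allpairsPdep; exists s, y; rewrite mem_index_enum.
Qed.

Lemma big_paths_S n (F : seq (dir d) -> R) :
  \sum_(s <- paths n.+1) F s = \sum_(s <- paths n) \sum_(y : dir d) F (rcons s y).
Proof. by rewrite /= big_allpairs_dep. Qed.

Lemma sum_path_fun s (F : dir d -> 'rV[R]_d) :
  \sum_(1 <= k < (size s).+1) F (path_fun s k) = \sum_(x <- s) F x.
Proof. by rewrite big_add1 /= (big_nth y0) /path_fun. Qed.

Lemma path_pos_rcons s y : path_pos (rcons s y) = path_pos s + dir_vec y.
Proof. by rewrite /path_pos -cats1 big_cat big_seq1. Qed.

Lemma path_fun_rcons s y k : (0 < k <= size s)%N ->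
  path_fun (rcons s y) k = path_fun s k.
Proof. by case: k => // k /= ks; rewrite /path_fun nth_rcons ks. Qed.

Lemma erw_trans_path_rcons s y m z : (m <= size s)%N ->
  erw_trans p m (path_fun (rcons s y)) z = erw_trans p m (path_fun s) z.
Proof.
move=> ms; congr (_ * _); apply: eq_big_nat => k /andP[k1 km].
by rewrite path_fun_rcons // k1 (leq_trans _ ms).
Qed.

Lemma path_prob_rcons s y : (0 < size s)%N ->
  path_prob (rcons s y) = path_prob s * erw_trans p (size s) (path_fun s) y.
Proof.
move=> s_gt0; rewrite /path_prob /erw_path_prob size_rcons big_nat_recr // -mulrA.
congr (_ * (_ * _)).
  apply: eq_big_nat => m /andP[m1 ms].
  by rewrite erw_trans_path_rcons ?path_fun_rcons ?m1 // ltnW.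
by rewrite erw_trans_path_rcons // /path_fun nth_rcons ltnn eqxx.
Qed.

Lemma path_prob_ge0 s : 0 <= path_prob s.
Proof.
rewrite mulr_ge0 ?invr_ge0 ?mulr_ge0 // prodr_ge0 // => m _.
exact: erw_trans_ge0.
Qed.

Lemma path_prob1 y : path_prob [:: y] = (2 * d%:R)^-1.
Proof. by rewrite /path_prob /erw_path_prob big_geq // mulr1. Qed.

Lemma sum_path_prob n : (0 < n)%N -> \sum_(s <- paths n) path_prob s = 1.
Proof.
elim: n => [//|[_ _|n IH _]].
  rewrite big_paths_S big_seq1; under eq_bigr do rewrite path_prob1.
  rewrite sumr_const card_dir -[_ *+ _]mulr_natr natrM mulVf //.
  by rewrite mulf_neq0 // pnatr_eq0 -lt0n.
rewrite big_paths_S -[RHS](IH isT) !big_seq; apply: eq_bigr => s /size_paths sn.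
under eq_bigr do rewrite path_prob_rcons ?sn //.
by rewrite -mulr_sumr -sn sum_erw_trans ?sn // mulr1.
Qed.

Definition mean_sqnorm n : R := \sum_(s <- paths n) path_prob s * sqnorm (path_pos s).

Lemma mean_sqnorm_ge0 n : 0 <= mean_sqnorm n.
Proof. by rewrite sumr_ge0 // => s _; rewrite mulr_ge0 ?path_prob_ge0 ?sqnorm_ge0. Qed.

Lemma mean_sqnormS n : (0 < n)%N ->
  mean_sqnorm n.+1 = (1 + 2 * erw_a d p / n%:R) * mean_sqnorm n + 1.
Proof.
move=> n_gt0; rewrite -[X in _ = _ + X](sum_path_prob n_gt0).
rewrite /mean_sqnorm big_paths_S mulr_sumr -big_split !big_seq.
apply: eq_bigr => s /size_paths sn /=.
under eq_bigr do rewrite path_prob_rcons ?sn // path_pos_rcons -mulrA.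
have pos_s : path_pos s = \sum_(1 <= k < (size s).+1) dir_vec (path_fun s k).
  by rewrite sum_path_fun.
by rewrite -mulr_sumr -sn pos_s erw_step_sqnorm ?sn //; ring.
Qed.

End erw_paths.
Arguments paths {d}.

Lemma norm_dir_vec_le1 (R : realType) d (y : dir d) : `|dir_vec y : 'rV[R]_d| <= 1.
Proof.
rewrite -(ler_pXn2r (isT : (0 < 2)%N)) ?nnegrE // expr1n.
by rewrite (le_trans (norm_sqr_le_sqnorm _)) // sqnorm_dir_vec.
Qed.

Section erw_probability.
Variables (R : realType) (dT : measure_display) (T : measurableType dT)
  (P : probability T R) (d : nat) (p : R) (X : nat -> T -> dir d) (y0 : dir d).
Hypotheses (d_gt0 : (0 < d)%N) (p_ge0 : 0 <= p) (p_le1 : p <= 1)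
  (X_erw : is_ERW P p X).

Definition cylinder n (s : seq (dir d)) : set T :=
  [set w | forall k, (1 <= k <= n)%N -> X k w = path_fun y0 s k].

Lemma measurable_cylinder n s : measurable (cylinder n s).
Proof.
change (measurable (\bigcap_(k in [set k | (1 <= k <= n)%N])
                     [set w | X k w = path_fun y0 s k])).
by apply: bigcap_measurableType => k _; exact: X_erw.1.
Qed.

Lemma prob_cylinder s : (0 < size s)%N -> P (cylinder (size s) s) = (path_prob p y0 s)%:E.
Proof. exact: X_erw.2. Qed.

Lemma erw_pos_cylinder n s w :
  size s = n -> cylinder n s w -> erw_pos X n w = path_pos R s.
Proof.
move=> <- cyl_w; rewrite /path_pos -(sum_path_fun y0); apply: eq_big_nat => k k_in.
by rewrite cyl_w.
Qed.

Definition path_of n w : seq (dir d) := [seq X k w | k <- iota 1 n].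

Lemma size_path_of n w : size (path_of n w) = n.
Proof. by rewrite size_map size_iota. Qed.

Lemma cylinder_path_of n w : cylinder n (path_of n w) w.
Proof.
move=> k /andP[k1 kn]; rewrite /path_fun (nth_map 0%N) ?size_iota; last by lia.
by rewrite nth_iota; [congr X; lia | lia].
Qed.

Lemma sqnorm_gtE n c : [set w | c < sqnorm (erw_pos X n w)]
  = \big[setU/set0]_(s <- paths n | c < sqnorm (path_pos R s)) cylinder n s.
Proof.
rewrite -bigcup_seq_cond; apply/seteqP; split => w /=.
  move=> c_lt; have cyl_w : cylinder n (path_of n w) w by exact: cylinder_path_of.
  exists (path_of n w) => //; have := mem_paths (path_of n w).
  by rewrite size_path_of /= -(erw_pos_cylinder (size_path_of _ _) cyl_w) c_lt => ->.
by move=> [s /andP[/size_paths s_n c_lt] /(erw_pos_cylinder s_n) ->].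
Qed.

Lemma measurable_sqnorm_gt n (c : R) : measurable [set w | c < sqnorm (erw_pos X n w)].
Proof.
rewrite sqnorm_gtE; apply: bigsetU_measurable => s _.
exact: measurable_cylinder.
Qed.

Lemma erw_chebyshev n (c : R) : (0 < n)%N -> 0 < c ->
  (P [set w | (c < sqnorm (erw_pos X n w))%R] <= (mean_sqnorm p y0 n / c)%:E)%E.
Proof.
move=> n_gt0 c_gt0; rewrite sqnorm_gtE.
rewrite (le_trans (le_measure_bigsetU _ _ (fun s _ => measurable_cylinder n s))) //.
rewrite big_seq_cond (eq_bigr (fun s => (path_prob p y0 s)%:E)); last first.
  by move=> s /andP[/size_paths sn _]; rewrite -sn; apply: prob_cylinder; rewrite sn.
rewrite -big_seq_cond sumEFin lee_fin /mean_sqnorm mulr_suml.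
rewrite [leRHS](bigID (fun s => c < sqnorm (path_pos R s))) /= -[leLHS]addr0 lerD //.
  apply: ler_sum => s c_lt; rewrite -mulrA ler_peMr ?path_prob_ge0 //.
  by rewrite ler_pdivlMr // mul1r (ltW c_lt).
by apply: sumr_ge0 => s _; rewrite divr_ge0 ?(ltW c_gt0) // mulr_ge0 ?path_prob_ge0 ?sqnorm_ge0.
Qed.

Hypothesis a_lt_half : 2 * erw_a d p < 1.

Lemma ae_erw_pos_sqr_le (e : R) : 0 < e ->
  {ae P, forall w, \forall k \near \oo, `|erw_pos X (k ^ 2) w| <= e * (k ^ 2)%:R}.
Proof.
move=> e_gt0.
have [K mean_le] := affine_rec_linear_bound a_lt_half
  (mean_sqnorm_ge0 y0 d_gt0 p_ge0 p_le1) (mean_sqnormS p y0 d_gt0).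
pose F k := [set w | (e * (k.+1 ^ 2)%:R) ^+ 2 < sqnorm (erw_pos X (k.+1 ^ 2) w)].
have PF k : (P (F k) <= (K / e ^+ 2 / (k.+1 ^ 2)%:R)%:E)%E.
  have k2_gt0 : 0 < (k.+1 ^ 2)%:R :> R by rewrite ltr0n expn_gt0.
  rewrite (le_trans (erw_chebyshev _ _)) ?expn_gt0 ?exprn_gt0 ?mulr_gt0 // lee_fin.
  rewrite ler_pdivrMr ?exprn_gt0 ?mulr_gt0 // (le_trans (mean_le _ _)) ?expn_gt0 //.
  have -> : K / e ^+ 2 / (k.+1 ^ 2)%:R * (e * (k.+1 ^ 2)%:R) ^+ 2 = K * (k.+1 ^ 2)%:R.
    by field; rewrite !lt0r_neq0.
  by [].
have := borel_cantelli_inv_sqr (fun k => measurable_sqnorm_gt _ _) PF.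
apply: filterS => w notF; apply: near_inftyS; apply: filterS notF => k /negP.
rewrite -leNgt => /(le_trans (norm_sqr_le_sqnorm _)).
have em_ge0 : 0 <= e * (k.+1 ^ 2)%:R by rewrite mulr_ge0 // (ltW e_gt0).
by rewrite ler_pXn2r // nnegrE // normr_ge0.
Qed.

Lemma ae_erw_pos_sqr_small : {ae P, forall w, forall e : R, 0 < e ->
  \forall k \near \oo, `|erw_pos X (k ^ 2) w| <= e * (k ^ 2)%:R}.
Proof.
have inv_gt0 j : 0 < j.+1%:R^-1 :> R by rewrite invr_gt0.
have := ae_foralln (fun j => ae_erw_pos_sqr_le (inv_gt0 j)).
apply: filterS => w small e e_gt0.
have [j _ /(_ j (leqnn j)) j_lt_e] := near_infty_natSinv_lt (PosNum e_gt0).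
by apply: filterS (small j) => k /le_trans; apply; rewrite ler_wpM2r // (ltW j_lt_e).
Qed.

End erw_probability.

Theorem theorem2p1 (R : realType) (dT : measure_display) (T : measurableType dT)
    (P : probability T R) (d : nat) (p : R) (X : nat -> T -> dir d) :
  (1 <= d)%N -> 0 <= p -> p <= 1 ->
  p < (2 * d%:R + 1) / (4 * d%:R) ->
  is_ERW P p X ->
  {ae P, forall w, (fun n : nat => n%:R^-1 *: erw_center X n w) @ \oo
                     --> (0 : 'rV[R]_d)}.
Proof.
move=> d_gt0 p_ge0 p_le1 p_lt X_erw.
have := ae_erw_pos_sqr_small (Ordinal d_gt0, true) d_gt0 p_ge0 p_le1 X_erw
  (erw_a_lt_half d_gt0 p_lt).
apply: filterS => w small_w.
apply: (@sublinear_mean_cvg _ _ (fun k => erw_pos X k w)).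
apply: sublinear_of_squares small_w; first by rewrite /erw_pos big_geq.
by move=> m; rewrite /erw_pos big_nat_recr //= addrAC subrr add0r norm_dir_vec_le1.
Qed.
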